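(* For all distributions $\mu_1,\mu_2,\nu_2$ on $\mathbb{C}[x]$ one has $$\mu_1 \rhd_{\nu_2}\mu_2 = \mu_1 \,{}_{\delta_1}\!\boxtimes_{\nu_2}\mu_2 ,$$ where the left side is the left component of the multiplicative conditionally monotone convolution and the right side is the left component of the multiplicative conditionally free convolution $(\mu_1,\delta_1)\boxtimes_c(\mu_2,\nu_2)$.
   Context: A distribution is a unital linear functional on $\mathbb{C}[x]$. An algebraic probability space $(\mathcal{A},\varphi,\psi)$ is a unital complex algebra with two unital linear functionals. For $X\in\mathcal{A}$ let $\mu_X(x^n)=\varphi(X^n)$ and $\nu_X(x^n)=\psi(X^n)$. The distribution $\delta_1$ is given by $\delta_1(x^n)=1$ for all $n\ge 0$. Conditionally monotone (c-monotone) independence. Let $I$ be a linearly ordered set and let $\{\mathcal{A}_i\}_{i\in I}$ be subalgebras of $\mathcal{A}$, none containing the unit. They are c-monotone independent if for all $n\ge1$, indices $i_1,\dots,i_n$ and $X_k\in\mathcal{A}_{i_k}$: (1) $\varphi(X_1\cdots X_n)=\varphi(X_1)\varphi(X_2\cdots X_n)$ whenever $i_1>i_2$; (2) $\varphi(X_1\cdots X_n)=\varphi(X_1\cdots X_{n-1})\varphi(X_n)$ whenever $i_n>i_{n-1}$; (3) $\varphi(X_1\cdots X_n)=(\varphi(X_j)-\psi(X_j))\varphi(X_1\cdots X_{j-1})\varphi(X_{j+1}\cdots X_n)+\psi(X_j)\varphi(X_1\cdots X_{j-1}X_{j+1}\cdots X_n)$ whenever $2\le j\le n-1$ and $i_{j-1}<i_j>i_{j+1}$;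 (4) conditions (1)–(3) also hold with $\varphi$ replaced by $\psi$ everywhere (monotone independence with respect to $\psi$). Elements are c-monotone independent if the non-unital subalgebras they generate are. Multiplicative c-monotone convolution: if $X,Y\in\mathcal{A}$ are such that $X-1$ and $Y$ are c-monotone independent (the algebra of $X-1$ preceding that of $Y$), the pair $(\mu_{XY},\nu_{XY})$ is denoted $(\mu_X,\nu_X)\rhd_c(\mu_Y,\nu_Y)$. Its left component depends only on $\mu_X,\mu_Y,\nu_Y$ and is denoted $\mu_X\rhd_{\nu_Y}\mu_Y$. Its right component is the multiplicative monotone convolution $\nu_X\rhd\nu_Y$. The convolution is defined for arbitrary distributions by realizing them in such a space. Conditionally free (c-free) independence: subalgebras $\{\mathcal{A}_i\}$ of $(\mathcal{A},\varphi,\psi)$ are c-free if they are freely independent with respect to $\psi$ and $\varphi(X_1\cdots X_n)=\prod_k\varphi(X_k)$ whenever $X_k\in\mathcal{A}_{i_k}$, $i_1\ne i_2\ne\cdots\ne i_n$ and $\psi(X_k)=0$ for all $k$. If $X,Y$ are c-free, $(\mu_{XY},\nu_{XY})$ depends only on $(\mu_X,\nu_X)$ and $(\mu_Y,\nu_Y)$. It is denoted $(\mu_X,\nu_X)\boxtimes_c(\mu_Y,\nu_Y)=(\mu_X\,{}_{\nu_X}\!\boxtimes_{\nu_Y}\mu_Y,\ \nu_X\boxtimes\nu_Y)$. *)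

From HB Require Import structures.
From mathcomp Require Import all_boot all_order all_algebra.
From mathcomp Require Import complex.
From mathcomp Require Export reals.
Set Implicit Arguments. Unset Strict Implicit. Unset Printing Implicit Defensive.
Import Order.TTheory GRing.Theory Num.Theory.
Local Open Scope ring_scope.

Section Defs.
Variable C : comNzRingType.
Variable A : algType C.

(* The non-unital subalgebra generated by X: span of X, X^2, X^3, ... *)
Definition nu_gen (X : A) (a : A) : Prop :=
  exists (n : nat) (c : nat -> C), a = \sum_(i < n) c i *: X ^+ i.+1.

Definition u_gen (X : A) (a : A) : Prop :=
  exists (n : nat) (c : nat -> C), a = \sum_(i < n) c i *: X ^+ i.

Definition wprod {I : Type} (w : seq (I * A)) : A := \prod_(p <- w) p.2.

(* conditions (1)-(3) of c-monotone independence, for the functional f,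
   with g playing the role of psi in condition (3) *)
Definition mon_conds {d} {I : orderType d} (f g : A -> C) (S : I -> A -> Prop) : Prop :=
  forall w : seq (I * A), (forall p, p \in w -> S p.1 p.2) ->
  [/\
      (forall i1 X1 i2 X2 r, w = [:: (i1, X1), (i2, X2) & r] -> (i2 < i1)%O ->
         f (wprod w) = f X1 * f (wprod ((i2, X2) :: r))),
      (forall l i1 X1 i2 X2, w = l ++ [:: (i1, X1); (i2, X2)] -> (i1 < i2)%O ->
         f (wprod w) = f (wprod (rcons l (i1, X1))) * f X2) &
      (forall l a Xa j Xj b Xb r, w = l ++ [:: (a, Xa), (j, Xj), (b, Xb) & r] ->
         (a < j)%O -> (b < j)%O ->
         f (wprod w) = (f Xj - g Xj) * f (wprod (rcons l (a, Xa))) * f (wprod ((b, Xb) :: r))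
                       + g Xj * f (wprod (l ++ [:: (a, Xa), (b, Xb) & r])))].

(* c-monotone independence of the family S w.r.t. (phi, psi): conditions (1)-(3)
   for phi, and (4) = conditions (1)-(3) with phi replaced by psi everywhere *)
Definition cmon_indep {d} {I : orderType d} (phi psi : A -> C) (S : I -> A -> Prop) : Prop :=
  mon_conds phi psi S /\ mon_conds psi psi S.

Definition alt_centered {I : eqType} (psi : A -> C) (S : I -> A -> Prop) (w : seq (I * A)) :=
  [/\ (forall p, p \in w -> S p.1 p.2), w != [::],
      all (fun p => psi p.2 == 0) w &
      forall l i1 X1 i2 X2 r, w = l ++ [:: (i1, X1), (i2, X2) & r] -> i1 != i2].

Definition cfree_indep {I : eqType} (phi psi : A -> C) (S : I -> A -> Prop) : Prop :=
  forall w : seq (I * A), alt_centered psi S w ->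
    psi (wprod w) = 0 /\ phi (wprod w) = \prod_(p <- w) phi p.2.

End Defs.

(* two-member family indexed by bool, with false < true *)
Definition fam2 (T : Type) (P Q : T -> Prop) : bool -> T -> Prop :=
  fun b => if b then Q else P.

From HB Require Import structures.
From mathcomp Require Import all_boot all_order all_algebra.
From mathcomp Require Import complex.
From mathcomp Require Import reals.
From mathcomp Require Import ring.
Import Order.TTheory GRing.Theory Num.Theory.
Local Open Scope ring_scope.

Set Implicit Arguments.
Unset Strict Implicit.
Unset Printing Implicit Defensive.

(* Since XY = Y + (X - 1)Y, the moments of XY are sums of values of phi on
   words in the letters (X - 1)^k and Y^k. On the c-monotone side, conditions
   (1)-(3) evaluate such words recursively from the moments of X - 1 and the
   phi- and psi-moments of Y: a leading Y-letter factors out, and an interior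
   Y^m between two (X - 1)-letters contributes (phi - psi)(Y^m) times a
   splitting plus psi(Y^m) times the word with the two neighbours merged.
   On the c-free side, nu_X' = delta_1 makes psi' the evaluation at 1 on
   polynomials in X', so products of psi'-centered (X' - 1)-letters stay
   centered; writing each Y'-letter as its centered part plus a scalar, c-freeness
   gives exactly the same recursion. The recursion determines every word, so
   the two sides agree. *)

Definition alternating {T : Type} (w : seq (bool * T)) : bool :=
  sorted (fun i j => i != j) [seq p.1 | p <- w].

Section Alternating.
Variable T : Type.
Implicit Types (p q : bool * T) (u v w : seq (bool * T)).

Lemma alternating_adj u p q v : alternating (u ++ [:: p, q & v]) -> p.1 != q.1.
Proof. by rewrite /alternating map_cat sorted_cat_cons /= => /and3P[]. Qed.

Lemma alternating_behead p w : alternating (p :: w) -> alternating w.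
Proof. exact: path_sorted. Qed.

Lemma alternatingPn w : ~~ alternating w ->
  exists u p q v, w = u ++ [:: p, q & v] /\ p.1 = q.1.
Proof.
elim: w => [//|p w IH]; case: w IH => [//|q w] IH.
have [eq_pq _|neq_pq] := eqVneq p.1 q.1; first by exists [::], p, q, w.
rewrite /alternating /= neq_pq => /IH[u [p' [q' [v [-> eq_pq']]]]].
by exists (p :: u), p', q', v.
Qed.

End Alternating.

Lemma in_replace_mid (T : eqType) (P : T -> Prop) (u s v : seq T) q :
  {in u ++ s ++ v, forall p, P p} -> P q -> {in u ++ q :: v, forall p, P p}.
Proof.
move=> Puv Pq p; rewrite mem_cat in_cons => /or3P[pu|/eqP->//|pv];
  by apply: Puv; rewrite !mem_cat ?pu ?pv ?orbT.
Qed.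

Section WordProduct.
Variables (K : comNzRingType) (D : algType K) (I : Type).
Implicit Types (p : I * D) (u v : seq (I * D)).

Lemma wprod_cons p u : wprod (p :: u) = p.2 * wprod u.
Proof. exact: big_cons. Qed.

Lemma wprod_cat u v : wprod (u ++ v) = wprod u * wprod v.
Proof. exact: big_cat. Qed.

End WordProduct.

Section GeneratedSubalgebra.
Variables (K : comNzRingType) (B : algType K).
Implicit Types (x a : B) (p : {poly K}).

Lemma horner_alg_sum x p : horner_alg x p = \sum_(i < size p) p`_i *: x ^+ i.
Proof.
rewrite -[in LHS](coefK p) poly_def linear_sum; apply: eq_bigr => i _.
by rewrite linearZ /= mulr_algl rmorphXn /= horner_algX.
Qed.

Lemma u_genP x a : u_gen x a <-> exists p, a = horner_alg x p.
Proof.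
split=> [[n [c ->]]|[p ->]]; last by exists (size p), (fun i => p`_i); exact: horner_alg_sum.
exists (\sum_(i < n) c i *: 'X^i); rewrite linear_sum; apply: eq_bigr => i _.
by rewrite linearZ /= mulr_algl rmorphXn /= horner_algX.
Qed.

Lemma u_gen_horner_alg x p : u_gen x (horner_alg x p).
Proof. by apply/u_genP; exists p. Qed.

Lemma u_gen_mul x a a' : u_gen x a -> u_gen x a' -> u_gen x (a * a').
Proof. by move=> /u_genP[p ->] /u_genP[q ->]; rewrite -rmorphM; apply: u_gen_horner_alg. Qed.

Lemma u_gen_subr_scalar x a c : u_gen x a -> u_gen x (a - c%:A).
Proof.
by move=> /u_genP[p ->]; rewrite -(horner_algC x) -rmorphB; apply: u_gen_horner_alg.
Qed.

Lemma u_gen_exp x k : u_gen x (x ^+ k).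
Proof. by have := u_gen_horner_alg x ('X ^+ k); rewrite rmorphXn /= horner_algX. Qed.

Lemma horner_alg_expB1 x k : (x - 1) ^+ k = horner_alg x (('X - 1) ^+ k).
Proof. by rewrite rmorphXn rmorphB /= rmorph1 horner_algX. Qed.

Lemma lfun_horner_alg (f : {linear B -> K^o}) x p :
  f (horner_alg x p) = \sum_(i < size p) p`_i * f (x ^+ i).
Proof. by rewrite horner_alg_sum linear_sum; apply: eq_bigr => i _; rewrite linearZ. Qed.

Lemma lfun_horner_alg_eval1 (f : {linear B -> K^o}) x p :
  (forall n, f (x ^+ n) = 1) -> f (horner_alg x p) = p.[1].
Proof.
move=> fx1; rewrite lfun_horner_alg horner_coef; apply: eq_bigr => i _.
by rewrite fx1 expr1n.
Qed.

End GeneratedSubalgebra.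

Lemma eq_lfun_horner_alg (K : comNzRingType) (A B : algType K)
    (f : {linear A -> K^o}) (g : {linear B -> K^o}) (x : A) (y : B) (p : {poly K}) :
  (forall n, f (x ^+ n) = g (y ^+ n)) -> f (horner_alg x p) = g (horner_alg y p).
Proof.
by move=> eq_fg; rewrite !lfun_horner_alg; apply: eq_bigr => i _; rewrite eq_fg.
Qed.

Lemma nu_gen_exp (K : comNzRingType) (A : algType K) (x : A) k :
  (0 < k)%N -> nu_gen x (x ^+ k).
Proof.
case: k => // k _; exists k.+1, (fun i => (i == k)%:R).
rewrite big_ord_recr /= eqxx scale1r big1 ?add0r // => i _.
by rewrite (ltn_eqF (ltn_ord i)) scale0r.
Qed.

Section Words.
Variables (K : comNzRingType) (D : algType K).
Implicit Types (x y : D) (p : bool * nat) (w : seq (bool * nat)).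

Definition letter x y p : D := if p.1 then y ^+ p.2 else (x - 1) ^+ p.2.
Definition word_val x y w : D := \prod_(p <- w) letter x y p.
Definition word_letters x y w : seq (bool * D) := [seq (p.1, letter x y p) | p <- w].

Lemma wprod_word_letters x y w : wprod (word_letters x y w) = word_val x y w.
Proof. by rewrite /wprod big_map. Qed.

Lemma word_val_cons x y p w : word_val x y (p :: w) = letter x y p * word_val x y w.
Proof. exact: big_cons. Qed.

Lemma word_val_merge x y u b j k v :
  word_val x y (u ++ [:: (b, j), (b, k) & v]) = word_val x y (u ++ (b, j + k)%N :: v).
Proof.
by rewrite /word_val !big_cat !big_cons /letter /=; congr (_ * _); case: b; rewrite exprD mulrA.
Qed.

Lemma word_val_mulXY x y w :
  word_val x y w * (x * y) =
  word_val x y (rcons w (true, 1%N)) + word_val x y (rcons (rcons w (false, 1%N)) (true, 1%N)).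
Proof.
rewrite /word_val !big_rcons /letter /= !expr1 -mulrA -mulrDr; congr (_ * _).
by rewrite mulrBl mul1r addrC subrK.
Qed.

End Words.

Definition positive_word (w : seq (bool * nat)) := all (fun p => 0 < p.2)%N w.

Section WordRules.
Variables (K : comNzRingType) (a b c : nat -> K).

Record cmon_word_rules (f : seq (bool * nat) -> K) : Prop := {
  rule_nil : f [::] = 1;
  rule_X1 k : f [:: (false, k)] = a k;
  rule_Y k : f [:: (true, k)] = b k;
  rule_merge u i j k v : f (u ++ [:: (i, j), (i, k) & v]) = f (u ++ (i, j + k)%N :: v);
  rule_Y_X1 k j v : alternating [:: (true, k), (false, j) & v] ->
    positive_word [:: (true, k), (false, j) & v] ->
    f [:: (true, k), (false, j) & v] = b k * f ((false, j) :: v);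
  rule_X1_Y k m : positive_word [:: (false, k); (true, m)] ->
    f [:: (false, k); (true, m)] = a k * b m;
  rule_X1_Y_X1 k m j v : alternating [:: (false, k), (true, m), (false, j) & v] ->
    positive_word [:: (false, k), (true, m), (false, j) & v] ->
    f [:: (false, k), (true, m), (false, j) & v] =
      (b m - c m) * a k * f ((false, j) :: v) + c m * f ((false, k + j)%N :: v)
}.

End WordRules.

Lemma cmon_word_rules_unique (K : comNzRingType) (a b c a' b' c' : nat -> K) f g :
  cmon_word_rules a b c f -> cmon_word_rules a' b' c' g ->
  a =1 a' -> b =1 b' -> c =1 c' ->
  forall w, positive_word w -> f w = g w.
Proof.
move=> rf rg eq_a eq_b eq_c w; have [n] := ubnP (size w).
elim: n w => // n IH w; rewrite ltnS => size_w pos_w.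
have IHw u : (size u < size w)%N -> positive_word u -> f u = g u.
  by move=> lt_uw; apply: IH; apply: leq_trans size_w.
have [alt_w|/alternatingPn[u [[i j] [[i' k] [v [def_w /= eq_i]]]]]] :=
  boolP (alternating w); last first.
  rewrite {}def_w {}eq_i in pos_w IHw *.
  rewrite (rule_merge rf) (rule_merge rg); apply: IHw; first by rewrite !size_cat ltn_add2l.
  move: pos_w; rewrite /positive_word !all_cat /= => /and4P[-> j0 k0 ->].
  by rewrite addn_gt0 j0.
case: w => [|[[] k] w] in size_w pos_w alt_w IHw *.
- by rewrite (rule_nil rf) (rule_nil rg).
- case: w => [|[[] j] v] in size_w pos_w alt_w IHw *.
  + by rewrite (rule_Y rf) (rule_Y rg) eq_b.
  + by [].
  + rewrite (rule_Y_X1 rf) // (rule_Y_X1 rg) // eq_b IHw //.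
    by case/andP: pos_w.
- case: w => [|[[] m] w] in size_w pos_w alt_w IHw *; last by [].
  + by rewrite (rule_X1 rf) (rule_X1 rg) eq_a.
  case: w => [|[[] j] v] in size_w pos_w alt_w IHw *.
  + by rewrite (rule_X1_Y rf) // (rule_X1_Y rg) // eq_a eq_b.
  + by [].
  move: (pos_w) => /and4P[k0 _ j0 pos_v].
  rewrite (rule_X1_Y_X1 rf) // (rule_X1_Y_X1 rg) // eq_a eq_b eq_c.
  by rewrite !IHw //= ?addn_gt0 ?k0 ?j0.
Qed.

Section MonotoneWordRules.
Variables (K : comNzRingType) (A : algType K) (phi psi : {linear A -> K^o}).
Hypothesis phi1 : phi 1 = 1.
Variables X Y : A.
Hypothesis monXY : mon_conds phi psi (fam2 (nu_gen (X - 1)) (nu_gen Y)).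

Let word_letters_in w : positive_word w ->
  {in word_letters X Y w, forall p, fam2 (nu_gen (X - 1)) (nu_gen Y) p.1 p.2}.
Proof.
move=> pos_w _ /mapP[[[] k] kw ->] /=; apply: nu_gen_exp;
  exact: (allP pos_w _ kw).
Qed.

Lemma cmon_word_rules_of_mon :
  cmon_word_rules (fun k => phi ((X - 1) ^+ k)) (fun k => phi (Y ^+ k))
    (fun k => psi (Y ^+ k)) (fun w => phi (word_val X Y w)).
Proof.
split=> [|k|k|u i j k v|k j v _ pos|k m pos|k m j v _ pos].
- by rewrite /word_val big_nil phi1.
- by rewrite /word_val big_seq1.
- by rewrite /word_val big_seq1.
- by rewrite word_val_merge.
- have [c1 _ _] := monXY (word_letters_in pos); rewrite -!wprod_word_letters.
  exact: (c1 true (Y ^+ k) false ((X - 1) ^+ j) _ erefl isT).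
- have [_ c2 _] := monXY (word_letters_in pos); rewrite -!wprod_word_letters.
  rewrite (c2 [::] false ((X - 1) ^+ k) true (Y ^+ m) erefl isT).
  by rewrite /wprod big_seq1.
- have [_ _ c3] := monXY (word_letters_in pos); rewrite -!wprod_word_letters.
  rewrite (c3 [::] false ((X - 1) ^+ k) true (Y ^+ m) false ((X - 1) ^+ j) _ erefl isT isT).
  by rewrite /wprod /= !big_cons big_nil mulr1 mulrA -exprD.
Qed.

End MonotoneWordRules.

Section CfreeWords.
Variables (K : comNzRingType) (B : algType K) (phi psi : {linear B -> K^o}).
Hypotheses (phi1 : phi 1 = 1) (psi1 : psi 1 = 1).
Variable S : bool -> B -> Prop.
Hypothesis cfreeS : cfree_indep phi psi S.
Hypothesis S_subr_scalar : forall i y (c : K), S i y -> S i (y - c%:A).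
Hypothesis S_false_mul : forall x x', S false x -> S false x' -> S false (x * x').
Hypothesis psi_false_mul :
  forall x x', S false x -> S false x' -> psi (x * x') = psi x * psi x'.

Implicit Types (x y z : B) (u v w : seq (bool * B)).

Definition reduced w := [/\ {in w, forall p, S p.1 p.2},
  {in w, forall p, ~~ p.1 -> psi p.2 = 0} & alternating w].

Definition noncentered w := count (fun p : bool * B => p.1 && (psi p.2 != 0)) w.

Definition glue x w := if w is q :: w' then (false, x * q.2) :: w' else [:: (false, x)].

Lemma wprod_glue x w : wprod (glue x w) = x * wprod w.
Proof. by case: w => [|q w]; rewrite !wprod_cons ?mulrA // /wprod big_nil. Qed.

Lemma noncentered_cat u v : noncentered (u ++ v) = (noncentered u + noncentered v)%N.
Proof. exact: count_cat. Qed.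

Lemma noncentered_glue x v : (noncentered (glue x v) <= noncentered v)%N.
Proof. by case: v => [|q v] //; rewrite /noncentered /= add0n leq_addl. Qed.

Lemma psi_center y : psi (y - (psi y)%:A) = 0.
Proof. by rewrite linearB linearZ /= psi1 [_ *: _]mulr1 subrr. Qed.

Lemma phi_center y : phi (y - (psi y)%:A) = phi y - psi y.
Proof. by rewrite linearB linearZ /= phi1 [_ *: _]mulr1. Qed.

Lemma phi_expand (a y b : B) :
  phi (a * y * b) = psi y * phi (a * b) + phi (a * (y - (psi y)%:A) * b).
Proof.
by rewrite mulrBr mulrBl linearB /= mulr_algr -scalerAl linearZ addrC subrK.
Qed.

Lemma reduced_behead p w : reduced (p :: w) -> reduced w.
Proof.
case=> Sw cw /alternating_behead alt_w; split=> // q qw;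
  [apply: Sw | apply: cw]; by rewrite inE qw orbT.
Qed.

Lemma reduced_set_true u y y' v :
  reduced (u ++ (true, y) :: v) -> S true y' -> reduced (u ++ (true, y') :: v).
Proof.
case=> Sw cw alt_w Sy'; split.
- exact: (in_replace_mid (s := [:: (true, y)])).
- exact: (in_replace_mid (s := [:: (true, y)])).
- by move: alt_w; rewrite /alternating !map_cat.
Qed.

Lemma reduced_glue u x y v :
  reduced (u ++ [:: (false, x), (true, y) & v]) -> reduced (u ++ glue x v).
Proof.
case=> Sw cw alt_w.
have x_in : (false, x) \in u ++ [:: (false, x), (true, y) & v].
  by rewrite mem_cat inE eqxx orbT.
have [Sx x0] := (Sw _ x_in, cw _ x_in isT).
case: v => [|[[] x'] v] in Sw cw alt_w x_in *.
- split; [exact: (in_replace_mid (s := [:: (false, x); (true, y)]) Sw)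
         |exact: (in_replace_mid (s := [:: (false, x); (true, y)]) cw)|].
  by move: alt_w; rewrite /alternating !map_cat !sorted_cat_cons => /andP[->].
- by move: alt_w; rewrite (catA u [:: (false, x)]) => /alternating_adj.
have x'_in : (false, x') \in u ++ [:: (false, x), (true, y), (false, x') & v].
  by rewrite mem_cat !inE eqxx !orbT.
have Sx' := Sw _ x'_in.
split.
- apply: (in_replace_mid (s := [:: (false, x); (true, y); (false, x')]) Sw).
  exact: S_false_mul.
- apply: (in_replace_mid (s := [:: (false, x); (true, y); (false, x')]) cw) => _ /=.
  by rewrite psi_false_mul // x0 mul0r.
- by move: alt_w; rewrite /alternating !map_cat !sorted_cat_cons.
Qed.

Lemma phi_reduced_centered w : reduced w -> {in w, forall p, psi p.2 = 0} ->
  phi (wprod w) = \prod_(p <- w) phi p.2.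
Proof.
case: w => [|p w] [Sw _ alt_w] w0; first by rewrite /wprod !big_nil phi1.
apply: (cfreeS _).2; split=> //; first by apply/allP=> q /w0 ->.
by move=> u i1 x1 i2 x2 v def_w; move: alt_w; rewrite def_w => /alternating_adj.
Qed.

Lemma phi_mul_reduced_centered x u : S false x -> alternating ((false, x) :: u) ->
  reduced u -> {in u, forall p, psi p.2 = 0} ->
  phi (x * wprod u) = phi x * \prod_(p <- u) phi p.2.
Proof.
move=> Sx alt_xu red_u u0.
have red_x0u : reduced ((false, x - (psi x)%:A) :: u).
  case: red_u => Su cu _; split=> // p; rewrite inE => /predU1P[->|pu] /=.
  - exact: S_subr_scalar.
  - exact: Su.
  - by rewrite psi_center.
  - exact: cu.
have x0u0 : {in (false, x - (psi x)%:A) :: u, forall p, psi p.2 = 0}.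
  by move=> p; rewrite inE => /predU1P[->|/u0]; rewrite ?psi_center.
have := phi_reduced_centered red_x0u x0u0.
rewrite wprod_cons big_cons /= phi_center => phi_x0u.
rewrite -{1}[x](subrK (psi x)%:A) mulrDl linearD phi_x0u mulr_algl linearZ /=.
by rewrite phi_reduced_centered // mulrBl subrK.
Qed.

Lemma noncentered0_centered w :
  reduced w -> noncentered w = 0%N -> {in w, forall p, psi p.2 = 0}.
Proof.
case=> _ cw _ nc0 [[] y] yw; last exact: cw.
have : ~~ has (fun p : bool * B => p.1 && (psi p.2 != 0)) w.
  by rewrite has_count -/(noncentered w) nc0.
by move=> /hasPn/(_ _ yw)/negPn/eqP.
Qed.

Lemma noncentered_split z w : reduced ((true, z) :: w) -> (0 < noncentered w)%N ->
  exists l x y v, w = l ++ [:: (false, x), (true, y) & v] /\ psi y != 0.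
Proof.
case=> _ _ alt_w; rewrite /noncentered -has_count => /hasP[[[] y] yw //= y0].
case/splitPr: yw alt_w => l v; case/lastP: l => [|l [[] x]] //.
  by rewrite -cats1 -catA -cat_cons => /alternating_adj.
by exists l, x, y, v; rewrite cat_rcons.
Qed.

(* Induction on the number of non-centered Y-letters: such a letter y is split
   as psi y + (y - psi y); the scalar part glues its two X-neighbours into one
   centered X-letter, as psi is multiplicative on S false. *)
Lemma phi_factor_centered x z w : S false x -> psi z = 0 -> reduced ((true, z) :: w) ->
  phi (x * z * wprod w) = phi x * phi z * phi (wprod w).
Proof.
move=> Sx z0; have [n] := ubnP (noncentered w); elim: n w => // n IH w.
rewrite ltnS => nc_w red_w; have [nc0|nc_pos] := posnP (noncentered w).
  have red_tail := reduced_behead red_w; have [_ _ alt_zw] := red_w.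
  have w0 := noncentered0_centered red_tail nc0.
  rewrite -mulrA -(wprod_cons (true, z)) phi_mul_reduced_centered //; last first.
    by move=> p; rewrite inE => /predU1P[->|/w0].
  by rewrite big_cons -mulrA phi_reduced_centered.
have [l [a [y [v [def_w y0]]]]] := noncentered_split red_w nc_pos.
set yc := y - (psi y)%:A.
have nc_w' : noncentered w = (noncentered l + noncentered v).+1.
  by rewrite def_w /noncentered count_cat /= y0 add0n addnS.
have red_glue : reduced ((true, z) :: l ++ glue a v).
  by move: red_w; rewrite def_w => /(reduced_glue (u := (true, z) :: l)).
have red_yc : reduced ((true, z) :: l ++ [:: (false, a), (true, yc) & v]).
  have Sy : S true y.
    by case: red_w => Sw _ _; apply: (Sw (true, y)); rewrite def_w inE mem_cat !inE eqxx !orbT.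
  move: red_w; rewrite def_w -!(cat_rcons (false, a) l) -!(cat_cons (true, z)).
  by move=> /reduced_set_true; apply; apply: S_subr_scalar.
have nc_glue : (noncentered (l ++ glue a v) < n)%N.
  rewrite noncentered_cat; apply: leq_trans nc_w.
  by rewrite nc_w' ltnS leq_add2l noncentered_glue.
have nc_yc : (noncentered (l ++ [:: (false, a), (true, yc) & v]) < n)%N.
  apply: leq_trans nc_w; rewrite nc_w' noncentered_cat.
  by rewrite /noncentered /= psi_center eqxx.
have IH_glue := IH _ nc_glue red_glue; have IH_yc := IH _ nc_yc red_yc.
rewrite wprod_cat wprod_glue !mulrA in IH_glue.
rewrite wprod_cat !wprod_cons /= !mulrA in IH_yc.
rewrite def_w wprod_cat !wprod_cons /= !mulrA (phi_expand _ y) [in RHS](phi_expand _ y).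
rewrite IH_glue IH_yc; ring.
Qed.

Lemma phi_cfree_expand x y w : S false x -> reduced ((true, y) :: w) ->
  phi (x * y * wprod w) =
  psi y * phi (x * wprod w) + phi x * (phi y - psi y) * phi (wprod w).
Proof.
move=> Sx red_yw; rewrite phi_expand phi_factor_centered ?psi_center ?phi_center //.
apply: (reduced_set_true (u := [::]) red_yw); apply: S_subr_scalar.
by case: red_yw => Sw _ _; apply: (Sw (true, y)); rewrite inE eqxx.
Qed.

End CfreeWords.

Section CfreeWordRules.
Variables (K : comNzRingType) (B : algType K) (phi psi : {linear B -> K^o}).
Hypotheses (phi1 : phi 1 = 1) (psi1 : psi 1 = 1).
Variables X Y : B.
Hypothesis cfreeXY : cfree_indep phi psi (fam2 (u_gen X) (u_gen Y)).
Hypothesis psiX : forall n, psi (X ^+ n) = 1.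

Let fam2_subr_scalar i y (c : K) :
  fam2 (u_gen X) (u_gen Y) i y -> fam2 (u_gen X) (u_gen Y) i (y - c%:A).
Proof. by case: i; apply: u_gen_subr_scalar. Qed.

Let psi_u_genX_mul x x' : u_gen X x -> u_gen X x' -> psi (x * x') = psi x * psi x'.
Proof.
by move=> /u_genP[p ->] /u_genP[q ->]; rewrite -rmorphM !lfun_horner_alg_eval1 // hornerM.
Qed.

Let u_gen_X1 k : u_gen X ((X - 1) ^+ k).
Proof. by rewrite horner_alg_expB1; apply: u_gen_horner_alg. Qed.

Let reduced_word_letters w : alternating w -> positive_word w ->
  reduced psi (fam2 (u_gen X) (u_gen Y)) (word_letters X Y w).
Proof.
move=> alt_w pos_w; split.
- move=> _ /mapP[[[] k] _ ->]; rewrite /letter /=; first exact: u_gen_exp.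
  exact: u_gen_X1.
- move=> _ /mapP[[[] k] kw ->] //= _.
  rewrite /letter /= horner_alg_expB1 lfun_horner_alg_eval1 // horner_exp !hornerE subrr.
  by rewrite expr0n gtn_eqF // (allP pos_w _ kw).
- by rewrite /alternating /word_letters -map_comp.
Qed.

Let phi_expand_letters x k w : u_gen X x ->
  alternating ((true, k) :: w) -> positive_word ((true, k) :: w) ->
  phi (x * word_val X Y ((true, k) :: w)) =
  psi (Y ^+ k) * phi (x * word_val X Y w)
  + phi x * (phi (Y ^+ k) - psi (Y ^+ k)) * phi (word_val X Y w).
Proof.
move=> Xx alt_w pos_w; rewrite word_val_cons mulrA -!wprod_word_letters.
exact: (phi_cfree_expand phi1 psi1 cfreeXY fam2_subr_scalar (@u_gen_mul _ _ X)
  psi_u_genX_mul Xx (reduced_word_letters alt_w pos_w)).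
Qed.

Lemma cmon_word_rules_of_cfree :
  cmon_word_rules (fun k => phi ((X - 1) ^+ k)) (fun k => phi (Y ^+ k))
    (fun k => psi (Y ^+ k)) (fun w => phi (word_val X Y w)).
Proof.
split=> [|k|k|u i j k v|k j v alt pos|k m pos|k m j v alt pos].
- by rewrite /word_val big_nil phi1.
- by rewrite /word_val big_seq1.
- by rewrite /word_val big_seq1.
- by rewrite word_val_merge.
- rewrite -[word_val _ _ _]mul1r phi_expand_letters //; last exact: (u_gen_exp X 0).
  by rewrite !mul1r phi1 mul1r mulrBl addrC subrK.
- have /andP[_ pos'] := pos.
  rewrite word_val_cons {1}/letter /= (phi_expand_letters (u_gen_X1 k)) //.
  by rewrite /word_val big_nil !mulr1 phi1; ring.
- have /andP[_ pos'] := pos.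
  rewrite /= word_val_cons {1}/letter /= (phi_expand_letters (u_gen_X1 k)) //.
  have -> : (X - 1) ^+ k * word_val X Y ((false, j) :: v) =
            word_val X Y ((false, (k + j)%N) :: v).
    by rewrite !word_val_cons /letter /= exprD mulrA.
  ring.
Qed.

End CfreeWordRules.

Lemma eq_word_val_mul_expXY (K : comNzRingType) (A B : algType K)
    (f : {linear A -> K^o}) (g : {linear B -> K^o}) (X Y : A) (X' Y' : B) :
  (forall w, positive_word w -> f (word_val X Y w) = g (word_val X' Y' w)) ->
  forall n w, positive_word w ->
  f (word_val X Y w * (X * Y) ^+ n) = g (word_val X' Y' w * (X' * Y') ^+ n).
Proof.
move=> eq_fg n; elim: n => [|n IH] w pos_w; first by rewrite !mulr1 eq_fg.
rewrite !exprS (mulrA (word_val X Y w)) (mulrA (word_val X' Y' w)).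
rewrite !word_val_mulXY !mulrDl !linearD /=.
by rewrite !IH // /positive_word !all_rcons (pos_w : all _ w).
Qed.

Theorem proposition3p2 (R : realType)
  (A : algType R[i]) (phi psi : {linear A -> R[i]^o})
  (phi1 : phi 1 = 1) (psi1 : psi 1 = 1) (X Y : A)
  (HXY : cmon_indep phi psi (fam2 (nu_gen (X - 1)) (nu_gen Y)))
  (B : algType R[i]) (phi' psi' : {linear B -> R[i]^o})
  (phi'1 : phi' 1 = 1) (psi'1 : psi' 1 = 1) (X' Y' : B)
  (HXY' : cfree_indep phi' psi' (fam2 (u_gen X') (u_gen Y')))
  (HmuX : forall n, phi (X ^+ n) = phi' (X' ^+ n))
  (HnuX' : forall n, psi' (X' ^+ n) = 1)
  (HmuY : forall n, phi (Y ^+ n) = phi' (Y' ^+ n))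
  (HnuY : forall n, psi (Y ^+ n) = psi' (Y' ^+ n)) :
  forall n, phi ((X * Y) ^+ n) = phi' ((X' * Y') ^+ n).
Proof.
have muX1 k : phi ((X - 1) ^+ k) = phi' ((X' - 1) ^+ k).
  by rewrite (horner_alg_expB1 X) (horner_alg_expB1 X'); apply: eq_lfun_horner_alg.
have eq_words := cmon_word_rules_unique (cmon_word_rules_of_mon phi1 HXY.1)
  (cmon_word_rules_of_cfree phi'1 psi'1 HXY' HnuX') muX1 HmuY HnuY.
move=> n; have := eq_word_val_mul_expXY eq_words n (w := [::]) isT.
by rewrite /word_val !big_nil !mul1r.
Qed.
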